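(* Consider a random family with random number of children $N\ge 1$ and sexes $S_1,S_2,\dots\in\{\mathrm{M},\mathrm{F}\}$ of its children in birth order ($S_k$ defined on the event $N\ge k$). Assume: (i) (random coin toss) there is $p_M\in(0,1)$ such that $P(S_1=\mathrm{M})=p_M$ and, for every $k\ge 2$, $P(S_k=\mathrm{M}\mid N\ge k, S_1,\dots,S_{k-1})=p_M$; write $p_F=1-p_M$; (ii) the sex of the first child does not predict whether the family has a second child: $P(N\ge 2\mid S_1=\mathrm{M})=P(N\ge2\mid S_1=\mathrm{F})$; (iii) there are numbers $p_S>0$ and $p_D$ with $P(N\ge 3\mid N\ge 2, S_1=S_2=\mathrm{M})=P(N\ge 3\mid N\ge 2, S_1=S_2=\mathrm{F})=p_S$ and $P(N\ge 3\mid N\ge 2, S_1=\mathrm{M},S_2=\mathrm{F})=P(N\ge 3\mid N\ge 2, S_1=\mathrm{F},S_2=\mathrm{M})=p_D$. Then \[ P\left(\text{MMM or FFF}\mid N\geq 3\right)=\left(p_M^3+p_F^3\right)\frac{1}{2 p_Fp_M p_D/p_S +p_F^2+p_M^2}. \] If additionally $p_S>p_D$, then the inflation factor satisfies \[ \frac{1}{2 p_Fp_M p_D/p_S +p_F^2+p_M^2}>1. \]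
   Context: All births are singletons. ''MMM'' denotes the event $N\ge 3$ and $S_1=S_2=S_3=\mathrm{M}$; ''FFF'' denotes $N\ge3$ and $S_1=S_2=S_3=\mathrm{F}$. All conditioning events appearing are assumed to have positive probability. *)

From HB Require Import structures.
From mathcomp Require Import all_boot all_order all_algebra.
From mathcomp Require Import all_classical all_reals all_analysis.
Set Implicit Arguments. Unset Strict Implicit. Unset Printing Implicit Defensive.
Import Order.TTheory GRing.Theory Num.Theory.
Local Open Scope classical_set_scope.
Local Open Scope ring_scope.

Definition Pr (d : measure_display) (T : measurableType d) (R : realType)
  (P : probability T R) (A : set T) : R := fine (P A).

Definition condP (d : measure_display) (T : measurableType d) (R : realType)
  (P : probability T R) (A B : set T) : R := Pr P (A `&` B) / Pr P B.

(* Sexes encoded as booleans: true = M, false = F. Children are indexed from 1.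
   sex_prefix S s = event that S_1,...,S_(size s) equal the entries of s. *)
Definition sex_prefix (T : Type) (S : nat -> T -> bool) (s : seq bool) : set T :=
  [set w | forall i, (i < size s)%N -> S i.+1 w = nth false s i].

From HB Require Import structures.
From mathcomp Require Import all_boot all_order all_algebra.
From mathcomp Require Import all_classical all_reals all_analysis.
From mathcomp Require Import lra ring.
Import Order.TTheory GRing.Theory Num.Theory.
Local Open Scope classical_set_scope.
Local Open Scope ring_scope.

(* Write m(n, s) for P(N >= n, (S_1, ..., S_|s|) = s).  Appending the sex of child n >= 2
   multiplies m(n, s) by p_M or p_F (coin toss), assumption (ii) gives m(2, [b]) = q p_b for
   one constant q, and (iii) turns m(2, s) into m(3, s) = p_S m(2, s) or p_D m(2, s).  Hence
   P(N >= 3) = q (p_S p_M^2 + 2 p_D p_M p_F + p_S p_F^2) and P(MMM or FFF) = q p_S (p_M^3 + p_F^3),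
   whose ratio is the stated one.  As p_F^2 + p_M^2 = 1 - 2 p_F p_M, the inverse of the
   inflation factor is 1 - 2 p_F p_M (1 - p_D / p_S), which lies in (0, 1) when p_D < p_S. *)

Section ElementaryProbability.
Context {d : measure_display} {T : measurableType d} {R : realType}.
Variable P : probability T R.

Lemma Pr_ge0 A : 0 <= Pr P A.
Proof. by rewrite /Pr fine_ge0. Qed.

Lemma Pr_setT : Pr P setT = 1.
Proof. by rewrite /Pr probability_setT. Qed.

Lemma PrU A B : measurable A -> measurable B -> A `&` B = set0 ->
  Pr P (A `|` B) = Pr P A + Pr P B.
Proof. by move=> mA mB AB0; rewrite /Pr measureU // fineD // fin_num_measure. Qed.

Lemma Pr_setID A B : measurable A -> measurable B ->
  Pr P A = Pr P (A `&` B) + Pr P (A `&` ~` B).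
Proof.
move=> mA mB; rewrite -PrU -?setIUr ?setUCr ?setIT //.
- exact: measurableI.
- by apply: measurableI => //; apply: measurableC.
- by rewrite setIACA setICr setI0.
Qed.

Lemma condP_ge0 A B : 0 <= condP P A B.
Proof. by rewrite divr_ge0 // Pr_ge0. Qed.

Lemma PrI_condP A B : 0 < Pr P B -> Pr P (A `&` B) = condP P A B * Pr P B.
Proof. by move=> B_gt0; rewrite divfK // gt_eqF. Qed.

End ElementaryProbability.

Section SexPrefix.
Context {T : Type} (S : nat -> T -> bool).

Lemma sex_prefix_nil : sex_prefix S [::] = setT.
Proof. by apply/seteqP; split=> w // _ []. Qed.

Lemma sex_prefix_cons b s :
  sex_prefix S (b :: s) = [set w | S 1 w = b] `&` sex_prefix (fun k => S k.+1) s.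
Proof.
apply/seteqP; split=> w /=.
- by move=> Sw; split=> [|i lt_is]; [exact: (Sw 0%N) | exact: (Sw i.+1)].
- by move=> [S1w Sw] [|i] //= lt_is; exact: Sw.
Qed.

Lemma sex_prefix_rcons s b :
  sex_prefix S (rcons s b) = sex_prefix S s `&` [set w | S (size s).+1 w = b].
Proof.
apply/seteqP; split=> w /=.
- move=> Sw; split=> [i lt_is|].
    by have := Sw i; rewrite size_rcons nth_rcons lt_is; apply; exact: ltnW.
  by have := Sw (size s); rewrite size_rcons nth_rcons ltnn eqxx; apply.
- move=> [Sw Sbw] i; rewrite size_rcons ltnS nth_rcons leq_eqVlt.
  by case/orP=> [/eqP ->|lt_is]; [rewrite ltnn eqxx | rewrite lt_is; exact: Sw].
Qed.

End SexPrefix.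

Lemma measurable_sex_prefix {d} {T : measurableType d} (S : nat -> T -> bool) s :
  (forall k, measurable [set w | S k w]) -> measurable (sex_prefix S s).
Proof.
move=> mS; elim/last_ind: s => [|s b IHs]; first by rewrite sex_prefix_nil.
rewrite sex_prefix_rcons; apply: measurableI => //.
case: b; first exact: mS.
rewrite (_ : [set w | _ = false] = ~` [set w | S (size s).+1 w]); first exact: measurableC.
by apply/seteqP; split=> w /=; case: (S _ w).
Qed.

Section Family.
Context {d : measure_display} {T : measurableType d} {R : realType}.
Context {P : probability T R} {N : T -> nat} {S : nat -> T -> bool}.
Hypothesis N_ge1 : forall w, (1 <= N w)%N.
Hypothesis mN : forall k, measurable [set w | (k <= N w)%N].
Hypothesis mS : forall k, measurable [set w | S k w].

Definition prefix_mass n s := Pr P ([set w | (n <= N w)%N] `&` sex_prefix S s).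

Lemma prefix_mass_ge0 n s : 0 <= prefix_mass n s.
Proof. exact: Pr_ge0. Qed.

Lemma measurable_prefix_event n s :
  measurable ([set w | (n <= N w)%N] `&` sex_prefix S s).
Proof. by apply: measurableI => //; exact: measurable_sex_prefix. Qed.

Lemma prefix_mass_nil n : prefix_mass n [::] = Pr P [set w | (n <= N w)%N].
Proof. by rewrite /prefix_mass sex_prefix_nil setIT. Qed.

Lemma prefix_mass1_nil : prefix_mass 1 [::] = 1.
Proof.
rewrite prefix_mass_nil -(Pr_setT P); congr Pr.
by apply/seteqP; split=> w // _; exact: N_ge1.
Qed.

Lemma prefix_mass_rcons n s :
  prefix_mass n s = prefix_mass n (rcons s true) + prefix_mass n (rcons s false).
Proof.
rewrite /prefix_mass !sex_prefix_rcons !setIA (Pr_setID P _ _ _ (mS (size s).+1)).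
  congr (Pr P _ + Pr P _); apply/seteqP; split=> w /=.
  - by case=> ? /negP/negbTE.
  - by case=> ? ->.
exact: measurable_prefix_event.
Qed.

Lemma condP_prefix n s :
  condP P [set w | (n.+1 <= N w)%N] ([set w | (n <= N w)%N] `&` sex_prefix S s)
  = prefix_mass n.+1 s / prefix_mass n s.
Proof.
rewrite /condP setIA; congr (Pr P (_ `&` _) / _).
by apply/seteqP; split=> w /= => [[]|?] //; split=> //; exact: ltnW.
Qed.

(* [if b then S k w else ~~ S k w] encodes S_k = b so that, for a concrete b, it is
   convertible to the literal events [S k w] and [~~ S k w] of the hypotheses. *)
Lemma first_sex_event b :
  [set w | if b then S 1 w else ~~ S 1 w] = [set w | (1 <= N w)%N] `&` sex_prefix S [:: b].
Proof.
rewrite sex_prefix_cons sex_prefix_nil setIT; apply/seteqP; split=> w /=.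
  by move=> Sw; split; [exact: N_ge1 | case: b (S 1 w) Sw => [] []].
by case=> _; case: b (S 1 w) => [] [].
Qed.

Lemma sexes2_event n b1 b2 :
  [set w | (n <= N w)%N /\ (if b1 then S 1 w else ~~ S 1 w)
                        /\ (if b2 then S 2 w else ~~ S 2 w)]
  = [set w | (n <= N w)%N] `&` sex_prefix S [:: b1; b2].
Proof.
rewrite !sex_prefix_cons sex_prefix_nil setIT; apply/seteqP; split=> w /=;
  by case=> ->; case: b1 b2 (S 1 w) (S 2 w) => [] [] [] [] [].
Qed.

Lemma same_sex_triples_event :
  ([set w | (3 <= N w)%N /\ S 1 w /\ S 2 w /\ S 3 w] `|`
   [set w | (3 <= N w)%N /\ ~~ S 1 w /\ ~~ S 2 w /\ ~~ S 3 w]) `&` [set w | (3 <= N w)%N]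
  = ([set w | (3 <= N w)%N] `&` sex_prefix S [:: true; true; true]) `|`
    ([set w | (3 <= N w)%N] `&` sex_prefix S [:: false; false; false]).
Proof.
rewrite !sex_prefix_cons sex_prefix_nil !setIT; apply/seteqP; split=> w /=;
  by case: (S 1 w) (S 2 w) (S 3 w) => [] [] [] /=; intuition.
Qed.

Lemma Pr_same_sex_triples :
  Pr P (([set w | (3 <= N w)%N /\ S 1 w /\ S 2 w /\ S 3 w] `|`
         [set w | (3 <= N w)%N /\ ~~ S 1 w /\ ~~ S 2 w /\ ~~ S 3 w]) `&` [set w | (3 <= N w)%N])
  = prefix_mass 3 [:: true; true; true] + prefix_mass 3 [:: false; false; false].
Proof.
rewrite same_sex_triples_event PrU //; [exact: measurable_prefix_event.. |].
rewrite !sex_prefix_cons; apply/seteqP; split=> w //=.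
by case=> -[_ [S1w _]] [_ [S1w' _]]; rewrite S1w in S1w'.
Qed.

Lemma prefix_mass2_succ n b1 b2 c :
  0 < Pr P [set w | (n <= N w)%N /\ (if b1 then S 1 w else ~~ S 1 w)
                                 /\ (if b2 then S 2 w else ~~ S 2 w)] ->
  condP P [set w | (n.+1 <= N w)%N]
          [set w | (n <= N w)%N /\ (if b1 then S 1 w else ~~ S 1 w)
                                /\ (if b2 then S 2 w else ~~ S 2 w)] = c ->
  prefix_mass n.+1 [:: b1; b2] = c * prefix_mass n [:: b1; b2].
Proof. by rewrite sexes2_event condP_prefix => m_gt0 <-; rewrite divfK ?gt_eqF. Qed.

Context {pM : R}.
Hypothesis coin_toss : forall (k : nat) (s : seq bool), (2 <= k)%N -> size s = k.-1 ->
  0 < Pr P ([set w | (k <= N w)%N] `&` sex_prefix S s) ->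
  condP P [set w | S k w] ([set w | (k <= N w)%N] `&` sex_prefix S s) = pM.

Lemma prefix_mass_male n s : (2 <= n)%N -> size s = n.-1 ->
  prefix_mass n (rcons s true) = pM * prefix_mass n s.
Proof.
move=> n_ge2 size_s; have [m_gt0|m_le0] := ltrP 0 (prefix_mass n s).
  rewrite -(coin_toss _ _ n_ge2 size_s m_gt0) -PrI_condP // /prefix_mass.
  by rewrite sex_prefix_rcons size_s (prednK (ltnW n_ge2)) setIA setIC.
have m_eq0 : prefix_mass n s = 0 by apply/eqP; rewrite eq_le m_le0 prefix_mass_ge0.
have := prefix_mass_rcons n s; rewrite m_eq0 mulr0.
have := prefix_mass_ge0 n (rcons s true); have := prefix_mass_ge0 n (rcons s false); lra.
Qed.

Lemma prefix_mass_female n s : (2 <= n)%N -> size s = n.-1 ->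
  prefix_mass n (rcons s false) = (1 - pM) * prefix_mass n s.
Proof.
move=> n_ge2 size_s; have := prefix_mass_rcons n s.
rewrite prefix_mass_male // => ?; lra.
Qed.

Lemma second_child_masses :
  Pr P [set w | S 1 w] = pM -> 0 < Pr P [set w | S 1 w] -> 0 < Pr P [set w | ~~ S 1 w] ->
  condP P [set w | (2 <= N w)%N] [set w | S 1 w] =
  condP P [set w | (2 <= N w)%N] [set w | ~~ S 1 w] ->
  exists q, prefix_mass 2 [:: true] = q * pM /\ prefix_mass 2 [:: false] = q * (1 - pM).
Proof.
rewrite (first_sex_event true) (first_sex_event false) !condP_prefix.
rewrite -[Pr P _]/(prefix_mass 1 [:: true]) -[Pr P (_ `&` _)]/(prefix_mass 1 [:: false]).
move=> m1M m1M_gt0 m1F_gt0 m2_eq; have m1F : prefix_mass 1 [:: false] = 1 - pM.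
  by have := prefix_mass_rcons 1 [::]; rewrite prefix_mass1_nil m1M /= => ?; lra.
rewrite m1M in m1M_gt0 m2_eq; rewrite m1F in m1F_gt0 m2_eq.
exists (prefix_mass 2 [:: true] / pM).
by rewrite divfK ?gt_eqF // m2_eq divfK ?gt_eqF.
Qed.

Section ThirdChild.
Context {q pS pD : R}.
Hypothesis m2M : prefix_mass 2 [:: true] = q * pM.
Hypothesis m2F : prefix_mass 2 [:: false] = q * (1 - pM).
Hypothesis m3MM : prefix_mass 3 [:: true; true] = pS * prefix_mass 2 [:: true; true].
Hypothesis m3FF : prefix_mass 3 [:: false; false] = pS * prefix_mass 2 [:: false; false].
Hypothesis m3MF : prefix_mass 3 [:: true; false] = pD * prefix_mass 2 [:: true; false].
Hypothesis m3FM : prefix_mass 3 [:: false; true] = pD * prefix_mass 2 [:: false; true].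

Lemma prefix_mass3_nil : prefix_mass 3 [::] =
  q * (pS * pM ^+ 2 + 2 * pD * pM * (1 - pM) + pS * (1 - pM) ^+ 2).
Proof.
rewrite (prefix_mass_rcons 3 [::]) (prefix_mass_rcons 3 [:: true]).
rewrite (prefix_mass_rcons 3 [:: false]) /= m3MM m3MF m3FM m3FF.
rewrite (prefix_mass_male 2 [:: true]) // (prefix_mass_female 2 [:: true]) //.
rewrite (prefix_mass_male 2 [:: false]) // (prefix_mass_female 2 [:: false]) //.
by rewrite m2M m2F; ring.
Qed.

Lemma prefix_mass3_same_sex :
  prefix_mass 3 [:: true; true; true] + prefix_mass 3 [:: false; false; false]
  = q * pS * (pM ^+ 3 + (1 - pM) ^+ 3).
Proof.
rewrite (prefix_mass_male 3 [:: true; true]) // (prefix_mass_female 3 [:: false; false]) //.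
rewrite m3MM m3FF (prefix_mass_male 2 [:: true]) // (prefix_mass_female 2 [:: false]) //.
by rewrite m2M m2F; ring.
Qed.

End ThirdChild.
End Family.

Lemma same_sex_ratio (F : fieldType) (pM pS pD q : F) :
  pS != 0 -> q * (pS * pM ^+ 2 + 2 * pD * pM * (1 - pM) + pS * (1 - pM) ^+ 2) != 0 ->
  q * pS * (pM ^+ 3 + (1 - pM) ^+ 3)
    / (q * (pS * pM ^+ 2 + 2 * pD * pM * (1 - pM) + pS * (1 - pM) ^+ 2))
  = (pM ^+ 3 + (1 - pM) ^+ 3)
    * (1 / (2 * (1 - pM) * pM * pD / pS + (1 - pM) ^+ 2 + pM ^+ 2)).
Proof.
move=> pS_neq0; rewrite mulf_eq0 negb_or => /andP[q_neq0 D_neq0].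
have -> : 2 * (1 - pM) * pM * pD / pS + (1 - pM) ^+ 2 + pM ^+ 2
          = (pS * pM ^+ 2 + 2 * pD * pM * (1 - pM) + pS * (1 - pM) ^+ 2) / pS.
  by field.
by field; apply/and3P.
Qed.

Lemma inflation_gt1 (F : realFieldType) (pM pS pD : F) :
  0 < pM < 1 -> 0 <= pD -> pD < pS ->
  1 < 1 / (2 * (1 - pM) * pM * pD / pS + (1 - pM) ^+ 2 + pM ^+ 2).
Proof.
move=> /andP[pM_gt0 pM_lt1] pD_ge0 pD_lt_pS.
have pS_gt0 : 0 < pS by apply: le_lt_trans pD_lt_pS.
have r_ge0 : 0 <= pD / pS by rewrite divr_ge0 // ltW.
have r_lt1 : pD / pS < 1 by rewrite ltr_pdivrMr // mul1r.
have u_gt0 : 0 < (1 - pM) * pM by rewrite mulr_gt0 ?subr_gt0.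
have -> : 2 * (1 - pM) * pM * pD / pS + (1 - pM) ^+ 2 + pM ^+ 2
          = 1 - 2 * ((1 - pM) * pM) * (1 - pD / pS) by field; rewrite gt_eqF.
rewrite div1r invf_gt1; nra.
Qed.

Theorem corollary1 (d : measure_display) (T : measurableType d) (R : realType)
  (P : probability T R) (N : T -> nat) (S : nat -> T -> bool)
  (pM pS pD : R) :
  (forall w, (1 <= N w)%N) ->
  (forall k, measurable [set w | (k <= N w)%N]) ->
  (forall k, measurable [set w | S k w]) ->
  (* (i) random coin toss *)
  0 < pM < 1 ->
  Pr P [set w | S 1%N w] = pM ->
  (forall (k : nat) (s : seq bool), (2 <= k)%N -> size s = k.-1 ->
     0 < Pr P ([set w | (k <= N w)%N] `&` sex_prefix S s) ->
     condP P [set w | S k w] ([set w | (k <= N w)%N] `&` sex_prefix S s) = pM) ->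
  (* (ii) *)
  0 < Pr P [set w | S 1%N w] -> 0 < Pr P [set w | ~~ S 1%N w] ->
  condP P [set w | (2 <= N w)%N] [set w | S 1%N w] =
  condP P [set w | (2 <= N w)%N] [set w | ~~ S 1%N w] ->
  (* (iii) *)
  0 < pS ->
  0 < Pr P [set w | (2 <= N w)%N /\ S 1%N w /\ S 2%N w] ->
  0 < Pr P [set w | (2 <= N w)%N /\ ~~ S 1%N w /\ ~~ S 2%N w] ->
  0 < Pr P [set w | (2 <= N w)%N /\ S 1%N w /\ ~~ S 2%N w] ->
  0 < Pr P [set w | (2 <= N w)%N /\ ~~ S 1%N w /\ S 2%N w] ->
  condP P [set w | (3 <= N w)%N] [set w | (2 <= N w)%N /\ S 1%N w /\ S 2%N w] = pS ->
  condP P [set w | (3 <= N w)%N] [set w | (2 <= N w)%N /\ ~~ S 1%N w /\ ~~ S 2%N w] = pS ->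
  condP P [set w | (3 <= N w)%N] [set w | (2 <= N w)%N /\ S 1%N w /\ ~~ S 2%N w] = pD ->
  condP P [set w | (3 <= N w)%N] [set w | (2 <= N w)%N /\ ~~ S 1%N w /\ S 2%N w] = pD ->
  (* conditioning event of the conclusion *)
  0 < Pr P [set w | (3 <= N w)%N] ->
  let pF := 1 - pM in
  let infl := 1 / (2 * pF * pM * pD / pS + pF ^+ 2 + pM ^+ 2) in
  condP P ([set w | (3 <= N w)%N /\ S 1%N w /\ S 2%N w /\ S 3%N w] `|`
           [set w | (3 <= N w)%N /\ ~~ S 1%N w /\ ~~ S 2%N w /\ ~~ S 3%N w])
        [set w | (3 <= N w)%N]
    = (pM ^+ 3 + pF ^+ 3) * infl
  /\ (pD < pS -> 1 < infl).
Proof.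
move=> N_ge1 mN mS pM_in PrM coin_toss PrM_gt0 PrF_gt0 second_indep pS_gt0
  pMM_gt0 pFF_gt0 pMF_gt0 pFM_gt0 cMM cFF cMF cFM Pr3_gt0 pF infl.
have [q [m2M m2F]] := second_child_masses N_ge1 mN mS PrM PrM_gt0 PrF_gt0 second_indep.
have m3MM := prefix_mass2_succ 2 true true pS pMM_gt0 cMM.
have m3FF := prefix_mass2_succ 2 false false pS pFF_gt0 cFF.
have m3MF := prefix_mass2_succ 2 true false pD pMF_gt0 cMF.
have m3FM := prefix_mass2_succ 2 false true pD pFM_gt0 cFM.
have pD_ge0 : 0 <= pD by rewrite -cMF condP_ge0.
have m3 := prefix_mass_nil (P := P) (N := N) (S := S) 3.
rewrite /condP -m3 (Pr_same_sex_triples mN mS); rewrite -m3 in Pr3_gt0.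
rewrite (prefix_mass3_same_sex mN mS coin_toss m2M m2F m3MM m3FF).
rewrite (prefix_mass3_nil mN mS coin_toss m2M m2F m3MM m3FF m3MF m3FM) in Pr3_gt0 *.
split; first by rewrite same_sex_ratio ?gt_eqF.
exact: inflation_gt1.
Qed.
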